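(* Let $A,B,C$ be finite-dimensional quantum systems and let $\Lambda^{C\to B}$ be a quantum channel (completely positive trace-preserving linear map). (i) If $\Lambda^{C\to AB}$ is an incoherent extension of $\Lambda^{C\to B}$, then for every measurement assemblage $\{M^A_{a|x}\}_{a,x}$ on $A$ the induced channel assemblage $\{\Lambda^{C\to B}_{a|x}\}_{a,x}$, defined by $\Lambda^{C\to B}_{a|x}[X]=\mathrm{Tr}_A\big(M^A_{a|x}\,\Lambda^{C\to AB}[X]\big)$, is unsteerable. (ii) Conversely, for every unsteerable channel assemblage $\{\Lambda_{a|x}\}_{a,x}$ for $\Lambda^{C\to B}$ there exist a system $A$, an incoherent extension $\Lambda^{C\to AB}$ of $\Lambda^{C\to B}$ and a measurement assemblage $\{M^A_{a|x}\}_{a,x}$ on $A$ such that $\Lambda_{a|x}[X]=\mathrm{Tr}_A\big(M^A_{a|x}\,\Lambda^{C\to AB}[X]\big)$ for all $a,x$ and all operators $X$ on $C$.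
   Context: A channel extension of $\Lambda^{C\to B}$ is a channel $\Lambda^{C\to AB}$ with $\mathrm{Tr}_A\circ\Lambda^{C\to AB}=\Lambda^{C\to B}$. An instrument is a collection $\{\Lambda_\lambda\}_\lambda$ of completely positive maps whose sum is a channel (each $\Lambda_\lambda$ is then a completely positive trace-non-increasing map, a subchannel). A channel extension $\Lambda^{C\to AB}$ of $\Lambda^{C\to B}$ is incoherent if there exist an instrument $\{\Lambda^{C\to B}_\lambda\}_\lambda$ (necessarily summing to $\Lambda^{C\to B}$) and unit-trace density operators $\{\sigma^A_\lambda\}_\lambda$ on $A$ such that $\Lambda^{C\to AB}=\sum_\lambda \Lambda^{C\to B}_\lambda\otimes\sigma^A_\lambda$, i.e. $\Lambda^{C\to AB}[X]=\sum_\lambda \Lambda^{C\to B}_\lambda[X]\otimes\sigma^A_\lambda$. A measurement assemblage on $A$ is a collection $\{M^A_{a|x}\}_{a,x}$ such that for each $x$, $\{M^A_{a|x}\}_a$ is a POVM ($M^A_{a|x}\ge 0$, $\sum_a M^A_{a|x}=\mathbb{1}$). A channel assemblage for $\Lambda^{C\to B}$ is a collection $\{\Lambda_{a|x}\}_{a,x}$ of completely positive maps $C\to B$ such that $\sum_a\Lambda_{a|x}=\Lambda^{C\to B}$ for every $x$. It is unsteerable if there exist an instrument $\{\Lambda_\lambda\}_\lambda$ and conditional probability distributions $p(a|x,\lambda)$ with $\Lambda_{a|x}=\sum_\lambda p(a|x,\lambda)\Lambda_\lambda$ for all $a,x$. *)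

From HB Require Import structures.
From mathcomp Require Import all_boot all_order all_algebra.
From mathcomp Require Import mxtens.
Set Implicit Arguments. Unset Strict Implicit. Unset Printing Implicit Defensive.
Import Order.TTheory GRing.Theory Num.Theory.
Local Open Scope ring_scope.

(* Quantum systems of dimension d are modelled by 'M[C]_d, C a numeric
   algebraically closed field (e.g. the complex numbers).
   Composite systems X (x) Y are 'M[C]_(dX * dY) with the index convention of
   mxtens (mxtens_index (x, y)); tensor product of operators is [tensmx]. *)

Section Quantum.
Variable C : numClosedFieldType.

Definition psd n (A : 'M[C]_n) : Prop :=
  forall v : 'cV[C]_n, 0 <= ((map_mx Num.conj v)^T *m A *m v) 0 0.

Definition density n (rho : 'M[C]_n) : Prop := psd rho /\ \tr rho = 1.

Definition ptrA dA dB (Y : 'M[C]_(dA * dB)) : 'M[C]_dB :=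
  \matrix_(i, j) \sum_(a < dA) Y (mxtens_index (a, i)) (mxtens_index (a, j)).

(* the map (f (x) id_k) : 'M_(dC*k) -> 'M_(dB*k) *)
Definition ampl dC dB k (f : 'M[C]_dC -> 'M[C]_dB) (X : 'M[C]_(dC * k))
  : 'M[C]_(dB * k) :=
  let blk (l l' : 'I_k) : 'M[C]_dC :=
    \matrix_(c, c') X (mxtens_index (c, l)) (mxtens_index (c', l')) in
  \matrix_(i, j) f (blk (mxtens_unindex i).2 (mxtens_unindex j).2)
                   (mxtens_unindex i).1 (mxtens_unindex j).1.

Definition CP dC dB (f : 'M[C]_dC -> 'M[C]_dB) : Prop :=
  forall k (X : 'M[C]_(dC * k)), psd X -> psd (ampl f X).

Definition CPmap dC dB (f : 'M[C]_dC -> 'M[C]_dB) : Prop :=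
  linear f /\ CP f.

Definition channel dC dB (f : 'M[C]_dC -> 'M[C]_dB) : Prop :=
  CPmap f /\ forall X, \tr (f X) = \tr X.

Definition instrument dC dB m (L : 'I_m -> 'M[C]_dC -> 'M[C]_dB) : Prop :=
  (forall l, CPmap (L l)) /\ channel (fun X => \sum_(l < m) L l X).

Definition channel_extension dC dA dB (Lab : 'M[C]_dC -> 'M[C]_(dA * dB))
  (Lam : 'M[C]_dC -> 'M[C]_dB) : Prop :=
  channel Lab /\ forall X, ptrA (Lab X) = Lam X.

Definition incoherent_extension dC dA dB (Lab : 'M[C]_dC -> 'M[C]_(dA * dB))
  (Lam : 'M[C]_dC -> 'M[C]_dB) : Prop :=
  channel_extension Lab Lam /\
  exists m (L : 'I_m -> 'M[C]_dC -> 'M[C]_dB) (sig : 'I_m -> 'M[C]_dA),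
    [/\ instrument L, forall l, density (sig l) &
        forall X, Lab X = \sum_(l < m) (sig l *t L l X)].

Definition meas_assemblage dA na nx (M : 'I_na -> 'I_nx -> 'M[C]_dA) : Prop :=
  (forall a x, psd (M a x)) /\ (forall x, \sum_(a < na) M a x = 1%:M).

Definition channel_assemblage dC dB na nx (Lam : 'M[C]_dC -> 'M[C]_dB)
  (La : 'I_na -> 'I_nx -> 'M[C]_dC -> 'M[C]_dB) : Prop :=
  (forall a x, CPmap (La a x)) /\
  (forall x X, \sum_(a < na) La a x X = Lam X).

Definition unsteerable dC dB na nx
  (La : 'I_na -> 'I_nx -> 'M[C]_dC -> 'M[C]_dB) : Prop :=
  exists m (L : 'I_m -> 'M[C]_dC -> 'M[C]_dB) (p : 'I_na -> 'I_nx -> 'I_m -> C),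
    [/\ instrument L,
        forall a x l, 0 <= p a x l,
        forall x l, \sum_(a < na) p a x l = 1 &
        forall a x X, La a x X = \sum_(l < m) p a x l *: L l X].

Definition induced dC dA dB na nx (M : 'I_na -> 'I_nx -> 'M[C]_dA)
  (Lab : 'M[C]_dC -> 'M[C]_(dA * dB)) (a : 'I_na) (x : 'I_nx)
  (X : 'M[C]_dC) : 'M[C]_dB :=
  ptrA ((M a x *t (1%:M : 'M[C]_dB)) *m Lab X).

End Quantum.

From HB Require Import structures.
From mathcomp Require Import all_boot all_order all_algebra.
From mathcomp Require Import mxtens sesquilinear spectral ring.
Import GRing.Theory Num.Theory.
Local Open Scope ring_scope.
Local Open Scope sesquilinear_scope.
Set Implicit Arguments. Unset Strict Implicit.

(* An incoherent extension is a mixture [\sum_l sigma_l (x) L_l] of instrument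
   branches tagged by fixed states, so measuring [M_{a|x}] on the tag gives
   [\sum_l Tr (M_{a|x} sigma_l) L_l]: a hidden-variable model with response
   [p(a|x,l) = Tr (M_{a|x} sigma_l)], nonnegative because the trace of a product
   of positive semidefinite matrices is (spectral theorem). Conversely, an
   unsteerable assemblage [\sum_l p(a|x,l) L_l] is reproduced by writing the
   outcome [l] into a classical register, [\sum_l |l><l| (x) L_l], and measuring
   the diagonal POVM [diag (p(a|x, .))] on it. *)

Section PositiveSemidefinite.
Variable C : numClosedFieldType.

Lemma trmxC_mul m n p (A : 'M[C]_(m, n)) (B : 'M[C]_(n, p)) :
  (A *m B)^t* = B^t* *m A^t*.
Proof. by rewrite trmx_mul map_mxM. Qed.

Lemma psdE n (A : 'M[C]_n) :
  psd A <-> forall v : 'cV_n, 0 <= (v^t* *m A *m v) 0 0.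
Proof. by split=> Apsd v; move: (Apsd v); rewrite map_trmx. Qed.

Lemma psd_congruence n k (A : 'M[C]_n) (P : 'M[C]_(n, k)) :
  psd A -> psd (P^t* *m A *m P).
Proof.
move=> /psdE Apsd; apply/psdE => v.
by have := Apsd (P *m v); rewrite trmxC_mul !mulmxA.
Qed.

Lemma delta_mx_trC n (i : 'I_n) : (delta_mx i 0 : 'cV[C]_n)^t* = delta_mx 0 i.
Proof. by apply/matrixP=> a b; rewrite !mxE rmorph_nat andbC. Qed.

Lemma mulmx_delta_entry n (A : 'M[C]_n) i j :
  (delta_mx 0 i : 'rV_n) *m A *m (delta_mx j 0 : 'cV_n) = (A i j)%:M.
Proof. by apply/matrixP=> a b; rewrite !ord1 -rowE -colE !mxE. Qed.

Lemma psd_diag_ge0 n (A : 'M[C]_n) i : psd A -> 0 <= A i i.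
Proof.
move=> /psdE /(_ (delta_mx i 0)).
by rewrite delta_mx_trC mulmx_delta_entry mxE mulr1n.
Qed.

Lemma psd_qform_delta n (A : 'M[C]_n) i j c :
  let v : 'cV_n := delta_mx i 0 + c *: delta_mx j 0 in
  (v^t* *m A *m v) 0 0 = A i i + c * A i j + c^* * A j i + c^* * c * A j j.
Proof.
move=> v; have -> : (delta_mx i 0 + c *: delta_mx j 0 : 'cV[C]_n)^t* =
    delta_mx 0 i + c^* *: delta_mx 0 j.
  apply/matrixP=> a b; rewrite !mxE rmorphD rmorphM /= !rmorph_nat.
  by rewrite andbC [(_ == j) && _]andbC.
rewrite /v !mulmxDl !mulmxDr.
rewrite -!scalemxAr -!scalemxAl !mulmx_delta_entry !mxE /= !mulr1n; ring.
Qed.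

Lemma psd_offdiag_real n (A : 'M[C]_n) i j c :
  psd A -> c * A i j + c^* * A j i \is Num.real.
Proof.
move=> Apsd; have /psdE/(_ (delta_mx i 0 + c *: delta_mx j 0)) := Apsd.
rewrite psd_qform_delta => /ger0_real qreal.
have -> : c * A i j + c^* * A j i =
    (A i i + c * A i j + c^* * A j i + c^* * c * A j j)
    - A i i - c^* * c * A j j by ring.
have cc_ge0 : 0 <= c^* * c by rewrite mulrC mul_conjC_ge0.
apply: rpredB; first apply: rpredB => //.
  by apply: ger0_real; exact: psd_diag_ge0.
by apply: ger0_real; apply: mulr_ge0 => //; exact: psd_diag_ge0.
Qed.

(* [z + w] and ['i (z - w)] are the values of [c z + c^* w] at [c = 1, 'i]. *)
Lemma real_pair_conj (z w : C) :
  z + w \is Num.real -> 'i * (z - w) \is Num.real -> w = z^*.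
Proof.
move=> /conj_Creal sum_real /conj_Creal diff_real.
rewrite rmorphD /= in sum_real; rewrite rmorphM rmorphB /= conjCi in diff_real.
have : 'i * (2%:R * (z^* - w)) =
    ('i * (z - w) - - 'i * (z^* - w^*)) + 'i * ((z^* + w^*) - (z + w)) by ring.
rewrite diff_real sum_real !subrr mulr0 add0r => /eqP.
rewrite !mulf_eq0 (negbTE (neq0Ci C)) pnatr_eq0 /= subr_eq0 => /eqP.
by move->.
Qed.

Lemma psd_hermsymmx n (A : 'M[C]_n) : psd A -> A \is hermsymmx.
Proof.
move=> Apsd; apply/is_hermitianmxP; rewrite expr0 scale1r.
apply/matrixP=> i j; rewrite !mxE; apply: real_pair_conj.
  by have := psd_offdiag_real j i 1 Apsd; rewrite conjC1 !mul1r.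
have := psd_offdiag_real j i 'i Apsd.
by rewrite conjCi mulNr -mulrBr.
Qed.

Lemma psd_diag_mx n (d : 'rV[C]_n) : (forall i, 0 <= d 0 i) -> psd (diag_mx d).
Proof.
move=> d_ge0; apply/psdE=> v; rewrite mul_mx_diag !mxE.
apply: sumr_ge0 => i _; rewrite !mxE mulrAC mulrC.
by apply: mulr_ge0 => //; rewrite mulrC mul_conjC_ge0.
Qed.

Lemma mxtrace_mul_psd_ge0 n (M S : 'M[C]_n) : psd M -> psd S -> 0 <= \tr (M *m S).
Proof.
move=> Mpsd Spsd.
have /hermitian_normalmx/orthomx_spectralP := psd_hermsymmx Spsd.
rewrite invmx_unitary ?spectral_unitarymx //.
set P := spectralmx S; set d := spectral_diag S => S_eq.
have PPt : P *m P^t* = 1%:M by apply/unitarymxP; exact: spectral_unitarymx.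
have d_ge0 i : 0 <= d 0 i.
  have : psd (P^t*^t* *m S *m P^t*) by exact: psd_congruence.
  rewrite trmxCK {1}S_eq !mulmxA PPt mul1mx -mulmxA PPt mulmx1.
  by move=> /(psd_diag_ge0 i); rewrite mxE eqxx mulr1n.
rewrite S_eq !mulmxA mxtrace_mulC !mulmxA -{1}(trmxCK P).
rewrite mul_mx_diag /mxtrace; apply: sumr_ge0 => i _; rewrite mxE.
by apply: mulr_ge0 => //; apply: psd_diag_ge0; exact: psd_congruence.
Qed.

Lemma psd0 n : psd (0 : 'M[C]_n).
Proof. by apply/psdE=> v; rewrite mulmx0 mul0mx mxE. Qed.

Lemma psdD n (A B : 'M[C]_n) : psd A -> psd B -> psd (A + B).
Proof.
move=> /psdE Apsd /psdE Bpsd; apply/psdE=> v.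
by rewrite mulmxDr mulmxDl mxE addr_ge0.
Qed.

Lemma psdZ n c (A : 'M[C]_n) : 0 <= c -> psd A -> psd (c *: A).
Proof.
move=> c_ge0 /psdE Apsd; apply/psdE=> v.
by rewrite -scalemxAr -scalemxAl mxE mulr_ge0.
Qed.

Lemma psd_sum n m (F : 'I_m -> 'M[C]_n) : (forall l, psd (F l)) -> psd (\sum_l F l).
Proof. by move=> Fpsd; apply: big_ind => //; [exact: psd0 | exact: psdD]. Qed.

Lemma density_delta_mx n (l : 'I_n) : density (delta_mx l l : 'M[C]_n).
Proof.
have -> : delta_mx l l = diag_mx (delta_mx 0 l) :> 'M[C]_n.
  apply/matrixP=> i j; rewrite !mxE; case: (eqVneq i j) => [->|ne].
    by rewrite andbb mulr1n.
  by case: (eqVneq i l) => //= eq_il; rewrite eq_il eq_sym in ne; rewrite (negbTE ne).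
split; first by apply: psd_diag_mx => i; rewrite mxE ler0n.
rewrite mxtrace_diag (bigD1 l) //= big1 => [|i ne_il]; rewrite mxE.
  by rewrite !eqxx addr0.
by rewrite (negbTE ne_il) andbF.
Qed.

End PositiveSemidefinite.

Lemma sum_mxtens_index (R : nmodType) m n (F : 'I_(m * n) -> R) :
  \sum_k F k = \sum_(a < m) \sum_(b < n) F (mxtens_index (a, b)).
Proof.
rewrite pair_big (reindex (@mxtens_index m n)) /=; first by apply: eq_bigr => -[].
by apply: onW_bij; exists (@mxtens_unindex m n);
  [exact: mxtens_indexK | exact: mxtens_unindexK].
Qed.

Lemma sum_natr_eq_mull (R : pzSemiRingType) n (F : 'I_n -> R) c g :
  \sum_t F t * ((t == c)%:R * g) = F c * g.
Proof.
rewrite (bigD1 c) //= eqxx mul1r big1 ?addr0 // => t /negbTE ->.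
by rewrite mul0r mulr0.
Qed.

Lemma sum_natr_eq_mulr (R : pzSemiRingType) n (F : 'I_n -> R) c g :
  \sum_t ((t == c)%:R * g) * F t = g * F c.
Proof.
rewrite (bigD1 c) //= eqxx mul1r big1 ?addr0 // => t /negbTE ->.
by rewrite !mul0r.
Qed.

Section PartialTrace.
Variable C : numClosedFieldType.

Lemma mxtrace_ptrA dA dB (Y : 'M[C]_(dA * dB)) : \tr (ptrA Y) = \tr Y.
Proof.
rewrite /mxtrace sum_mxtens_index exchange_big /=.
by apply: eq_bigr => b _; rewrite mxE.
Qed.

Lemma ptrA_tensmx dA dB (A : 'M[C]_dA) (B : 'M[C]_dB) : ptrA (A *t B) = \tr A *: B.
Proof.
apply/matrixP=> i j; rewrite !mxE /mxtrace mulr_suml.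
by apply: eq_bigr => a _; rewrite tensmxE.
Qed.

Lemma ptrA_sum dA dB m (F : 'I_m -> 'M[C]_(dA * dB)) :
  ptrA (\sum_l F l) = \sum_l ptrA (F l).
Proof.
apply/matrixP=> i j; rewrite !mxE summxE.
under eq_bigr => a _ do rewrite summxE.
by rewrite exchange_big; apply: eq_bigr => l _; rewrite !mxE.
Qed.

Lemma tensmxZDr m n p q (A : 'M[C]_(m, n)) a (B1 B2 : 'M[C]_(p, q)) :
  A *t (a *: B1 + B2) = a *: (A *t B1) + A *t B2.
Proof.
apply/matrixP=> i j; case: i / mxtens_indexP => i1 i2.
case: j / mxtens_indexP => j1 j2.
rewrite tensmxE [in RHS]mxE [(a *: (A *t B1)) _ _]mxE !tensmxE.
by rewrite !mxE mulrDr mulrCA.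
Qed.

End PartialTrace.

Section CompletePositivity.
Variables (C : numClosedFieldType) (dC dB : nat).
Implicit Types f g : 'M[C]_dC -> 'M[C]_dB.

Lemma eq_CPmap f g : f =1 g -> CPmap f -> CPmap g.
Proof.
move=> fg [f_lin f_CP]; split=> [a u v | k X Xpsd]; first by rewrite -!fg f_lin.
have -> : ampl g X = ampl f X by apply/matrixP=> i j; rewrite !mxE fg.
exact: f_CP.
Qed.

Lemma CPmap_sum m (F : 'I_m -> 'M[C]_dC -> 'M[C]_dB) :
  (forall l, CPmap (F l)) -> CPmap (fun X => \sum_l F l X).
Proof.
move=> F_CP; split=> [a u v | k X Xpsd].
  rewrite scaler_sumr -big_split; apply: eq_bigr => l _ /=.
  by rewrite (proj1 (F_CP l)).
have -> : ampl (fun X => \sum_l F l X) X = \sum_l ampl (F l) X.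
  by apply/matrixP=> i j; rewrite !mxE !summxE; apply: eq_bigr => l _; rewrite mxE.
by apply: psd_sum => l; apply: (proj2 (F_CP l)).
Qed.

Lemma CPmap_scale c f : 0 <= c -> CPmap f -> CPmap (fun X => c *: f X).
Proof.
move=> c_ge0 [f_lin f_CP]; split=> [a u v | k X Xpsd] /=.
  by rewrite f_lin scalerDr !scalerA mulrC.
have -> : ampl (fun X => c *: f X) X = c *: ampl f X by apply/matrixP=> i j; rewrite !mxE.
exact/psdZ/f_CP.
Qed.

Lemma CPmap_conic m (L : 'I_m -> 'M[C]_dC -> 'M[C]_dB) (c : 'I_m -> C) :
  (forall l, CPmap (L l)) -> (forall l, 0 <= c l) ->
  CPmap (fun X => \sum_l c l *: L l X).
Proof. by move=> L_CP c_ge0; apply: CPmap_sum => l; exact: CPmap_scale. Qed.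

(* The isometry [v |-> e_l (x) v] from [B (x) K] into [(M (x) B) (x) K], written
   as an operator acting on row vectors. *)
Definition tens_embed_mx m k (l : 'I_m) : 'M[C]_(dB * k, (m * dB) * k) :=
  \matrix_(s, t) ((s == mxtens_index ((mxtens_unindex (mxtens_unindex t).1).2,
                                       (mxtens_unindex t).2))%:R
                  * ((mxtens_unindex (mxtens_unindex t).1).1 == l)%:R).

Lemma ampl_tensmx_delta m k (l : 'I_m) f (Y : 'M[C]_(dC * k)) :
  ampl (fun X => (delta_mx l l : 'M_m) *t f X) Y
  = (tens_embed_mx k l)^t* *m ampl f Y *m tens_embed_mx k l.
Proof.
apply/matrixP=> i j.
case: i / mxtens_indexP => i1 kk; case: i1 / mxtens_indexP => a b.
case: j / mxtens_indexP => j1 kk'; case: j1 / mxtens_indexP => a' b'.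
rewrite [in RHS]mxE.
under eq_bigr => t _ do rewrite [tens_embed_mx _ _ t _]mxE !mxtens_indexK /=.
rewrite sum_natr_eq_mull [in RHS]mxE.
under eq_bigr => s _ do rewrite [(_^t*) _ _]mxE [_^T _ _]mxE
  [tens_embed_mx _ _ _ _]mxE !mxtens_indexK /= rmorphM !rmorph_nat.
rewrite sum_natr_eq_mulr /ampl [LHS]mxE [in RHS]mxE !mxtens_indexK /=.
rewrite tensmxE [delta_mx _ _ _ _]mxE.
by case: (a == l); case: (a' == l); rewrite /= ?mul1r ?mulr1 ?mul0r ?mulr0.
Qed.

Lemma CPmap_tensmx_delta m (l : 'I_m) f :
  CPmap f -> CPmap (fun X => (delta_mx l l : 'M_m) *t f X).
Proof.
move=> [f_lin f_CP]; split=> [a u v | k X Xpsd] /=; first by rewrite f_lin tensmxZDr.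
by rewrite ampl_tensmx_delta; apply/psd_congruence/f_CP.
Qed.

End CompletePositivity.

Section Steering.
Variables (C : numClosedFieldType) (dC dB : nat).
Implicit Types Lam : 'M[C]_dC -> 'M[C]_dB.

Lemma induced_tensmx_sum dA na nx m (M : 'I_na -> 'I_nx -> 'M[C]_dA)
    (Lab : 'M[C]_dC -> 'M[C]_(dA * dB)) (L : 'I_m -> 'M[C]_dC -> 'M[C]_dB)
    (sig : 'I_m -> 'M[C]_dA) :
  (forall X, Lab X = \sum_l sig l *t L l X) ->
  forall a x X, induced M Lab a x X = \sum_l \tr (M a x *m sig l) *: L l X.
Proof.
move=> LabE a x X; rewrite /induced LabE mulmx_sumr ptrA_sum.
by apply: eq_bigr => l _; rewrite tensmx_mul mul1mx ptrA_tensmx.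
Qed.

Lemma induced_incoherent_unsteerable Lam dA (Lab : 'M[C]_dC -> 'M[C]_(dA * dB))
    na nx (M : 'I_na -> 'I_nx -> 'M[C]_dA) :
  incoherent_extension Lab Lam -> meas_assemblage M ->
  channel_assemblage Lam (induced M Lab) /\ unsteerable (induced M Lab).
Proof.
move=> [[_ ptrA_Lab] [m [L [sig [L_inst sig_density LabE]]]]] [M_psd M_sum].
pose p a x l := \tr (M a x *m sig l).
have inducedE := induced_tensmx_sum M LabE.
have p_ge0 a x l : 0 <= p a x l.
  by apply: mxtrace_mul_psd_ge0 => //; case: (sig_density l).
have p_sum1 x l : \sum_a p a x l = 1.
  by rewrite -raddf_sum -mulmx_suml M_sum mul1mx; case: (sig_density l).
have LamE X : Lam X = \sum_l L l X.
  rewrite -ptrA_Lab LabE ptrA_sum; apply: eq_bigr => l _.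
  by rewrite ptrA_tensmx; case: (sig_density l) => _ ->; rewrite scale1r.
split; last by exists m, L, p; split.
split=> [a x | x X].
  apply: eq_CPmap (CPmap_conic (proj1 L_inst) (p_ge0 a x)) => X.
  by rewrite inducedE.
rewrite LamE; under eq_bigr => a _ do rewrite inducedE.
by rewrite exchange_big; apply: eq_bigr => l _; rewrite -scaler_suml p_sum1 scale1r.
Qed.

Definition classical_extension m (L : 'I_m -> 'M[C]_dC -> 'M[C]_dB) X :
  'M[C]_(m * dB) := \sum_l (delta_mx l l *t L l X).

Lemma classical_extension_incoherent Lam m (L : 'I_m -> 'M[C]_dC -> 'M[C]_dB) :
  instrument L -> (forall X, \sum_l L l X = Lam X) ->
  incoherent_extension (classical_extension L) Lam.
Proof.
move=> L_inst L_sum; have [L_CP [_ L_tr]] := L_inst.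
have ptrA_ext X : ptrA (classical_extension L X) = Lam X.
  rewrite ptrA_sum -L_sum; apply: eq_bigr => l _.
  by rewrite ptrA_tensmx (proj2 (density_delta_mx C l)) scale1r.
split; last first.
  by exists m, L, (fun l => delta_mx l l); split=> // l; exact: density_delta_mx.
split=> //; split=> [|X]; last by rewrite -mxtrace_ptrA ptrA_ext -L_sum L_tr.
by apply: CPmap_sum => l; exact: CPmap_tensmx_delta.
Qed.

Definition response_meas na nx m (p : 'I_na -> 'I_nx -> 'I_m -> C) a x : 'M[C]_m :=
  diag_mx (\row_l p a x l).

Lemma response_meas_assemblage na nx m (p : 'I_na -> 'I_nx -> 'I_m -> C) :
  (forall a x l, 0 <= p a x l) -> (forall x l, \sum_a p a x l = 1) ->
  meas_assemblage (response_meas p).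
Proof.
move=> p_ge0 p_sum1; split=> [a x | x]; first by apply: psd_diag_mx => l; rewrite mxE.
apply/matrixP=> i j; rewrite summxE !mxE.
under eq_bigr => a _ do rewrite !mxE.
by rewrite sumrMnl p_sum1.
Qed.

Lemma induced_classical_extension na nx m (p : 'I_na -> 'I_nx -> 'I_m -> C)
    (L : 'I_m -> 'M[C]_dC -> 'M[C]_dB) a x X :
  induced (response_meas p) (classical_extension L) a x X = \sum_l p a x l *: L l X.
Proof.
rewrite (induced_tensmx_sum _ (L := L) (fun X => erefl)).
apply: eq_bigr => l _; rewrite mul_diag_mx /mxtrace (bigD1 l) //= big1 ?mxE ?eqxx.
  by rewrite mulr1 addr0.
by move=> i ne_il; rewrite !mxE (negbTE ne_il) andbF mulr0.
Qed.

Lemma response_realization Lam m (L : 'I_m -> 'M[C]_dC -> 'M[C]_dB)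
    na nx (p : 'I_na -> 'I_nx -> 'I_m -> C) :
  instrument L -> (forall X, \sum_l L l X = Lam X) ->
  (forall a x l, 0 <= p a x l) -> (forall x l, \sum_a p a x l = 1) ->
  [/\ incoherent_extension (classical_extension L) Lam,
      meas_assemblage (response_meas p) &
      forall a x X, induced (response_meas p) (classical_extension L) a x X
                    = \sum_l p a x l *: L l X].
Proof.
move=> L_inst L_sum p_ge0 p_sum1; split.
- exact: classical_extension_incoherent.
- exact: response_meas_assemblage.
- exact: induced_classical_extension.
Qed.

Lemma unsteerable_instrument_sum Lam na nx (La : 'I_na -> 'I_nx -> 'M[C]_dC -> 'M[C]_dB)
    m (L : 'I_m -> 'M[C]_dC -> 'M[C]_dB) (p : 'I_na -> 'I_nx -> 'I_m -> C) (x : 'I_nx) :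
  channel_assemblage Lam La -> (forall l, \sum_a p a x l = 1) ->
  (forall a X, La a x X = \sum_l p a x l *: L l X) ->
  forall X, \sum_l L l X = Lam X.
Proof.
move=> [_ La_sum] p_sum1 LaE X; rewrite -(La_sum x X).
under [RHS]eq_bigr => a _ do rewrite LaE.
by rewrite exchange_big; apply: eq_bigr => l _; rewrite -scaler_suml p_sum1 scale1r.
Qed.

Lemma channel_instrument Lam : channel Lam -> instrument (fun _ : 'I_1 => Lam).
Proof.
move=> [Lam_CP Lam_tr]; split=> //; split=> [|X]; last by rewrite big_ord1.
by apply: eq_CPmap Lam_CP => X; rewrite big_ord1.
Qed.

Lemma unsteerable_incoherent_realization Lam na nx
    (La : 'I_na -> 'I_nx -> 'M[C]_dC -> 'M[C]_dB) :
  channel Lam -> channel_assemblage Lam La -> unsteerable La ->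
  exists dA (Lab : 'M[C]_dC -> 'M[C]_(dA * dB)) (M : 'I_na -> 'I_nx -> 'M[C]_dA),
    [/\ incoherent_extension Lab Lam, meas_assemblage M &
        forall a x X, La a x X = induced M Lab a x X].
Proof.
move=> Lam_chan La_ass [m [L [p [L_inst p_ge0 p_sum1 LaE]]]].
case: nx => [|nx] in La La_ass p p_ge0 p_sum1 LaE *.
  (* Without settings the model says nothing about [Lam]; use the instrument [{Lam}]. *)
  pose q (a : 'I_na) (x : 'I_0) (l : 'I_1) : C := 1.
  have q_sum1 x l : \sum_a q a x l = 1 by case: x.
  have [ext meas _] := response_realization (channel_instrument Lam_chan)
    (fun X => big_ord1 _ (fun=> Lam X)) (fun _ _ _ => ler01) q_sum1.
  by exists 1, (classical_extension (fun=> Lam)), (response_meas q); split=> // a [].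
have L_sum := unsteerable_instrument_sum La_ass (p_sum1 ord0) (LaE ^~ ord0).
have [ext meas inducedE] := response_realization L_inst L_sum p_ge0 p_sum1.
exists m, (classical_extension L), (response_meas p); split=> // a x X.
by rewrite inducedE LaE.
Qed.

End Steering.

Theorem proposition1 (C : numClosedFieldType) (dC dB : nat)
  (Lam : 'M[C]_dC -> 'M[C]_dB) (HLam : channel Lam) :
  (forall (dA : nat) (Lab : 'M[C]_dC -> 'M[C]_(dA * dB)),
     incoherent_extension Lab Lam ->
     forall (na nx : nat) (M : 'I_na -> 'I_nx -> 'M[C]_dA),
       meas_assemblage M ->
       channel_assemblage Lam (induced M Lab) /\ unsteerable (induced M Lab))
  /\
  (forall (na nx : nat) (La : 'I_na -> 'I_nx -> 'M[C]_dC -> 'M[C]_dB),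
     channel_assemblage Lam La -> unsteerable La ->
     exists (dA : nat) (Lab : 'M[C]_dC -> 'M[C]_(dA * dB))
            (M : 'I_na -> 'I_nx -> 'M[C]_dA),
       [/\ incoherent_extension Lab Lam, meas_assemblage M &
           forall a x X, La a x X = induced M Lab a x X]).
Proof.
split=> [dA Lab Lab_inc na nx M M_meas | na nx La La_ass La_unst].
  exact: induced_incoherent_unsteerable.
exact: unsteerable_incoherent_realization.
Qed.
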